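(* Let $(S,W)$ be the spherical Coxeter complex of type $D_n$ ($n\ge4$). Let $\lambda_i:=\frac{1}{\sqrt{2(n+1-i)}}$ for $i\neq2$ and $\lambda_2:=\lambda_1$. Let $\alpha\subset S$ be a root and let $v$ be a vertex of type $i$ in the interior of $\alpha$. Then $\sin d(v,\partial\alpha)\in\{\lambda_i,2\lambda_i\}$. Moreover, if $i=n$ then $\sin d(v,\partial\alpha)=\lambda_n$, and if $i\in\{1,2\}$ then $\sin d(v,\partial\alpha)=2\lambda_1=2\lambda_2$.
   Context: $S$ is the unit sphere in $\mathbb{R}^n$ with standard basis $e_1,\dots,e_n$, and $W$ is the Weyl group of $D_n$ (permutations of coordinates combined with an even number of sign changes), acting by reflections. Roots of $(S,W)$ are the closed hemispheres $\{x:\langle x,c\rangle\ge0\}$ with center $c=\frac{1}{\sqrt2}(\pm e_j\pm e_k)$, $j\ne k$; $\partial\alpha$ is the boundary great sphere of $\alpha$. Vertex types: a vertex is of type $i\neq 2$ if it lies in the $W$-orbit of $\frac{1}{\sqrt{n+1-i}}(e_i+e_{i+1}+\dots+e_n)$, and of type $2$ if it lies in the $W$-orbit of $\frac{1}{\sqrt n}(-e_1+e_2+\dots+e_n)$. The interior of $\alpha$ is $\alpha\setminus\partial\alpha$; $d$ is the spherical metric. *)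

(* R : realType. Points of R^n are
   functions 'I_n -> R; coordinate e_{m+1} of the paper is index m : 'I_n. *)
From mathcomp Require Import all_boot all_order all_algebra.
From mathcomp Require Import all_fingroup.
From mathcomp Require Import all_classical all_reals all_analysis.
Import Order.TTheory GRing.Theory Num.Theory.
Local Open Scope ring_scope.
Local Open Scope classical_set_scope.

Definition dotp {R : realType} {n : nat} (x y : 'I_n -> R) : R :=
  \sum_(k < n) x k * y k.

Definition sphere {R : realType} (n : nat) : set ('I_n -> R) :=
  [set x | dotp x x = 1].

Definition sdist {R : realType} {n : nat} (x y : 'I_n -> R) : R :=
  acos (dotp x y).

Definition sdist_set {R : realType} {n : nat} (x : 'I_n -> R)
  (A : set ('I_n -> R)) : R :=
  inf [set sdist x y | y in A].

Definition root_center {R : realType} {n : nat} (j k : 'I_n) (sj sk : bool)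
  : 'I_n -> R :=
  fun m => ((if m == j then (-1) ^+ sj else 0) +
            (if m == k then (-1) ^+ sk else 0)) / Num.sqrt 2.

(* the root (closed hemisphere) with center c *)
Definition hemisphere {R : realType} {n : nat} (c : 'I_n -> R)
  : set ('I_n -> R) := [set x | sphere n x /\ 0 <= dotp x c].

Definition great_sphere {R : realType} {n : nat} (c : 'I_n -> R)
  : set ('I_n -> R) := [set x | sphere n x /\ dotp x c = 0].

Definition root_interior {R : realType} {n : nat} (c : 'I_n -> R)
  : set ('I_n -> R) := hemisphere c `\` great_sphere c.

(* The Weyl group W(D_n): permutations of coordinates combined with an even
   number of sign changes. The element (s, e) acts by
   x |-> (m |-> (-1)^(e m) * x (s m)). *)
Definition weyl_act {R : realType} {n : nat} (s : 'S_n) (e : 'I_n -> bool)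
  (x : 'I_n -> R) : 'I_n -> R :=
  fun m => (-1) ^+ (e m) * x (s m).

Definition even_signs {n : nat} (e : 'I_n -> bool) : bool :=
  ~~ odd #|[pred m | e m]|.

(* representative vertex of type i (1 <= i <= n) *)
Definition type_rep {R : realType} (n i : nat) : 'I_n -> R :=
  if i == 2%N then
    fun m => (if val m == 0%N then -1 else 1) / Num.sqrt (n%:R)
  else
    fun m => (if (i.-1 <= val m)%N then 1 else 0) / Num.sqrt ((n + 1 - i)%:R).

Definition vertex_of_type {R : realType} (n i : nat) (v : 'I_n -> R) : Prop :=
  exists (s : 'S_n) (e : 'I_n -> bool),
    even_signs e /\ v = weyl_act s e (type_rep n i).

Definition lam {R : realType} (n i : nat) : R :=
  if i == 2%N then 1 / Num.sqrt ((2 * n)%:R)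
  else 1 / Num.sqrt ((2 * (n + 1 - i))%:R).

From mathcomp Require Import all_boot all_order all_algebra.
From mathcomp Require Import all_fingroup.
From mathcomp Require Import all_classical all_reals all_analysis.
From mathcomp Require Import ring lra.
Import Order.TTheory GRing.Theory Num.Theory.
Set Implicit Arguments.
Unset Strict Implicit.
Unset Printing Implicit Defensive.
Local Open Scope ring_scope.

(* For unit vectors [v] and [c] with [<v, c> >= 0], the point of the great
   sphere [c^perp] nearest to [v] is the normalised projection of [v], at angle
   [acos (sqrt (1 - <v, c>^2))]; hence [sin d(v, \partial alpha) = <v, c>].
   For a root center [c = ((-1)^sj e_j + (-1)^sk e_k) / sqrt 2] this is
   [(+-v_j +- v_k) / sqrt 2].  Every coordinate of a vertex of type [i] is [0]
   or [+-sqrt 2 lambda_i], so positivity leaves [lambda_i] (one nonzero term) or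
   [2 lambda_i] (two).  A vertex of type [n] has a single nonzero coordinate,
   while vertices of type [1] and [2] have none equal to zero. *)

Lemma ler_acos (R : realType) (r s : R) : -1 <= r <= 1 -> -1 <= s <= 1 ->
  r <= s -> acos s <= acos r.
Proof.
move=> hr hs rs; rewrite leNgt; apply/negP => lt_acos.
have acos_itv (w : R) : -1 <= w <= 1 -> acos w \in `[0, pi].
  by move=> hw; rewrite in_itv /= acos_ge0 ?acos_lepi.
have := ltr_cos (acos_itv _ hr) (acos_itv _ hs).
by rewrite /= lt_acos !acosK ?in_itv //= => /idP; lra.
Qed.

Section SphericalDistance.
Variables (R : realType) (n : nat).
Implicit Types (a b c u v x y z : 'I_n -> R).

Lemma dotpC x y : dotp x y = dotp y x.
Proof. by apply: eq_bigr => m _; rewrite mulrC. Qed.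

Lemma dotp_affine a b z (r q : R) :
  dotp (fun m => (a m - r * b m) / q) z = dotp a z / q - r * dotp b z / q.
Proof.
rewrite /dotp mulr_sumr !mulr_suml -sumrB; apply: eq_bigr => m _; ring.
Qed.

(* The expansion of [|v - t c - s y|^2 >= 0]. *)
Lemma dotp_combination_ge0 v c y (t s : R) :
  0 <= dotp v v + t ^+ 2 * dotp c c + s ^+ 2 * dotp y y
       - 2 * t * dotp v c - 2 * s * dotp v y + 2 * t * s * dotp c y.
Proof.
have sq_ge0 : 0 <= \sum_(m < n) (v m - t * c m - s * y m) ^+ 2.
  by apply: sumr_ge0 => m _; exact: sqr_ge0.
have expand : \sum_(m < n) (v m - t * c m - s * y m) ^+ 2
   + 2 * t * dotp v c + 2 * s * dotp v y =
   dotp v v + t ^+ 2 * dotp c c + s ^+ 2 * dotp y y + 2 * t * s * dotp c y.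
  rewrite /dotp !mulr_sumr -!big_split /=; apply: eq_bigr => m _; ring.
lra.
Qed.

Section GreatSphere.
Variables v c : 'I_n -> R.
Hypotheses (v1 : dotp v v = 1) (c1 : dotp c c = 1).

Lemma sqr_dotp_le1 : dotp v c ^+ 2 <= 1.
Proof. by have := dotp_combination_ge0 v c c (dotp v c) 0; rewrite v1 c1; nra. Qed.

Lemma sqr_sqrt_dotp_compl :
  Num.sqrt (1 - dotp v c ^+ 2) ^+ 2 = 1 - dotp v c ^+ 2.
Proof. by rewrite sqr_sqrtr // subr_ge0 sqr_dotp_le1. Qed.

Lemma sqrt_dotp_compl_itv : 0 <= Num.sqrt (1 - dotp v c ^+ 2) <= 1.
Proof. by have := sqr_sqrt_dotp_compl; rewrite sqrtr_ge0 /=; nra. Qed.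

Lemma sqr_dotp_great_sphere y :
  great_sphere c y -> dotp v y ^+ 2 <= 1 - dotp v c ^+ 2.
Proof.
move=> [y1 yc0]; have := dotp_combination_ge0 v c y (dotp v c) (dotp v y).
by rewrite v1 c1 y1 (dotpC c y) yc0; nra.
Qed.

(* When [v = +-c] the projection of [v] onto [c^perp] vanishes and any point of
   the great sphere will do. *)
Lemma great_sphere_dotp_max u : great_sphere c u ->
  exists2 y, great_sphere c y & dotp v y = Num.sqrt (1 - dotp v c ^+ 2).
Proof.
move=> cu; set t := dotp v c; set q := Num.sqrt (1 - t ^+ 2).
have q2 : q ^+ 2 = 1 - t ^+ 2 := sqr_sqrt_dotp_compl.
have [t2_lt1|t2_ge1] := ltrP (t ^+ 2) 1; last first.
  have -> : q = 0 by apply/eqP; rewrite sqrtr_eq0 subr_le0.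
  exists u => //; apply/eqP; rewrite -sqrf_eq0 eq_le sqr_ge0 andbT.
  by rewrite (le_trans (sqr_dotp_great_sphere cu)) // subr_le0.
have q_neq0 : q != 0 by rewrite gt_eqF // sqrtr_gt0 subr_gt0.
set y := fun m => (v m - t * c m) / q.
have vy : dotp v y = q.
  rewrite dotpC dotp_affine v1 (dotpC c v) -/t.
  by apply: (mulIf q_neq0); rewrite mulrBl !divfK // -expr2 q2; ring.
have yc : dotp y c = 0 by rewrite dotp_affine c1 -/t; field.
exists y => //; split => //.
by rewrite /sphere /= dotp_affine vy (dotpC c y) yc divff //; ring.
Qed.

Lemma sdist_set_great_sphere u : great_sphere c u ->
  sdist_set v (great_sphere c) = acos (Num.sqrt (1 - dotp v c ^+ 2)).
Proof.
move=> cu; set q := Num.sqrt _.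
have /andP[q_ge0 q_le1] : 0 <= q <= 1 := sqrt_dotp_compl_itv.
have q2 : q ^+ 2 = 1 - dotp v c ^+ 2 := sqr_sqrt_dotp_compl.
have [y0 cy0 vy0] := great_sphere_dotp_max cu.
have lb : lbound [set sdist v y | y in great_sphere c] (acos q).
  move=> _ [y cy <-]; have := sqr_dotp_great_sphere cy; rewrite -q2 => vy_le.
  by apply: ler_acos; nra.
apply/eqP; rewrite eq_le; apply/andP; split.
- by apply: ge_inf; [exists (acos q) | exists y0 => //; rewrite /sdist vy0].
- by apply: lb_le_inf => //; exists (acos q); exists y0 => //; rewrite /sdist vy0.
Qed.

Lemma sin_sdist_great_sphere u : great_sphere c u -> 0 <= dotp v c ->
  sin (sdist_set v (great_sphere c)) = dotp v c.
Proof.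
move=> cu vc_ge0; have /andP[q_ge0 q_le1] := sqrt_dotp_compl_itv.
rewrite (sdist_set_great_sphere cu) sin_acos ?sqr_sqrt_dotp_compl; last first.
  by rewrite q_le1 (le_trans _ q_ge0) ?lerN10.
by rewrite opprB addrC subrK sqrtr_sqr ger0_norm.
Qed.

End GreatSphere.

Lemma root_interior_dotp_gt0 c v : root_interior c v -> 0 < dotp v c.
Proof.
move=> [[v1 vc_ge0] vc_neq0]; rewrite lt_def vc_ge0 andbT.
by apply/eqP => vc0; apply: vc_neq0.
Qed.

End SphericalDistance.

Section RootCenter.
Variables (R : realType) (n : nat) (j k : 'I_n).

Lemma dotp_root_center sj sk (x : 'I_n -> R) :
  dotp x (root_center j k sj sk) =
  ((-1) ^+ sj * x j + (-1) ^+ sk * x k) / Num.sqrt 2.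
Proof.
rewrite /dotp /root_center.
transitivity (\sum_(m < n)
  ((if m == j then x j * (-1) ^+ sj / Num.sqrt 2 else 0) +
   (if m == k then x k * (-1) ^+ sk / Num.sqrt 2 else 0))).
  apply: eq_bigr => m _.
  by case: (m =P j) => [->|_]; case: (_ =P k) => [->|_]; rewrite /=; ring.
by rewrite big_split /= -!big_mkcond !big_pred1_eq; ring.
Qed.

Hypothesis jk : j != k.

Lemma dotp_root_centers sj sk sk' :
  dotp (root_center j k sj sk') (root_center (R := R) j k sj sk) =
  (1 + (-1) ^+ (sk' (+) sk)) / 2.
Proof.
rewrite dotp_root_center /root_center !eqxx (negbTE jk) eq_sym (negbTE jk).
rewrite !addr0 !add0r !mulrA -mulrDl -mulrA -invfM -expr2 sqr_sqrtr //.
by rewrite -!signr_addb addbb expr0 addbC.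
Qed.

Lemma root_center_sphere sj sk : sphere n (root_center (R := R) j k sj sk).
Proof.
by rewrite /sphere /= dotp_root_centers addbb expr0 divff.
Qed.

Lemma great_sphere_root_center_flip sj sk :
  great_sphere (root_center j k sj sk) (root_center (R := R) j k sj (~~ sk)).
Proof.
split; first exact: root_center_sphere.
by rewrite dotp_root_centers addNb addbb expr1 subrr mul0r.
Qed.

End RootCenter.

Lemma norm_or0_neq0 (R : realDomainType) (a z : R) :
  (z == 0) || (`|z| == a) -> z != 0 -> 0 <= a /\ (z = a \/ z = - a).
Proof.
move=> /orP[/eqP ->|]; first by rewrite eqxx.
by rewrite eqr_norml => /andP[/orP[]/eqP ez a_ge0 _]; split; auto.
Qed.

Lemma addr_gt0_norm_or0 (R : realDomainType) (a x y : R) :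
  (x == 0) || (`|x| == a) -> (y == 0) || (`|y| == a) -> 0 < x + y ->
  x + y = a *+ ((x != 0) + (y != 0)).
Proof.
move=> hx hy; have [x0|xn] := eqVneq x 0; have [y0|yn] := eqVneq y 0;
  rewrite /= mulrnDr ?mulr1n ?mulr0n.
- by rewrite x0 y0 addr0 => _.
- by have [a_ge0 [] ->] := norm_or0_neq0 hy yn; rewrite x0 => xy_gt0; lra.
- by have [a_ge0 [] ->] := norm_or0_neq0 hx xn; rewrite y0 => xy_gt0; lra.
- have [a_ge0 [] ->] := norm_or0_neq0 hx xn;
    by have [_ [] ->] := norm_or0_neq0 hy yn => xy_gt0; lra.
Qed.

Section Vertices.
Variables (R : realType) (n : nat).
Implicit Types (s : 'S_n) (e : 'I_n -> bool) (x : 'I_n -> R) (m : 'I_n).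

Lemma signed_weyl_act_eq0 (b : bool) s e x m :
  ((-1) ^+ b * weyl_act s e x m == 0) = (x (s m) == 0).
Proof. by rewrite /weyl_act !mulf_eq0 !signr_eq0. Qed.

Lemma normr_signed_weyl_act (b : bool) s e x m :
  `|(-1) ^+ b * weyl_act s e x m| = `|x (s m)|.
Proof. by rewrite /weyl_act !normrMsign. Qed.

Lemma sqrt2_lam i : Num.sqrt 2 * lam n i =
  if i == 2%N then 1 / Num.sqrt (n%:R) else 1 / Num.sqrt ((n + 1 - i)%:R) :> R.
Proof.
have s2 : Num.sqrt (2 : R) != 0 by rewrite gt_eqF ?sqrtr_gt0.
by rewrite /lam; case: ifP => _; rewrite natrM sqrtrM // !div1r invfM mulVKf.
Qed.

Lemma type_rep_coord i m :
  (type_rep (R := R) n i m == 0) ||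
  (`|type_rep (R := R) n i m| == Num.sqrt 2 * lam n i).
Proof.
rewrite sqrt2_lam /type_rep; case: ifP => _ /=.
  rewrite normrM normfV (ger0_norm (sqrtr_ge0 _)).
  by case: ifP => _; rewrite ?normrN normr1 eqxx orbT.
case: ifP => _; last by rewrite mul0r eqxx.
by rewrite ger0_norm ?eqxx ?orbT //; exact: divr_ge0 ler01 (sqrtr_ge0 _).
Qed.

Lemma type_rep_neq0 i m : (0 < n)%N -> (i == 1%N) || (i == 2%N) ->
  type_rep (R := R) n i m != 0.
Proof.
move=> n_gt0; have sqrt_n : Num.sqrt (n%:R : R) != 0.
  by rewrite gt_eqF // sqrtr_gt0 ltr0n.
move=> /orP[]/eqP ->; rewrite /type_rep /=.
  by rewrite addnK mul1r invr_eq0.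
rewrite mulf_eq0 negb_or invr_eq0 sqrt_n andbT.
by case: ifP => _; rewrite ?oppr_eq0 oner_eq0.
Qed.

Lemma type_rep_top_support m : n != 2%N -> type_rep (R := R) n n m != 0 ->
  val m = n.-1.
Proof.
rewrite /type_rep => /negbTE ->; case: ifP => [le_m _|_]; last by rewrite mul0r eqxx.
have n_gt0 : (0 < n)%N by apply: leq_ltn_trans (ltn_ord m).
by apply/eqP; rewrite eqn_leq le_m andbT -ltnS prednK ?ltn_ord.
Qed.

Lemma type_rep_top_single s (j k : 'I_n) : n != 2%N -> j != k ->
  ~~ ((type_rep (R := R) n n (s j) != 0) && (type_rep (R := R) n n (s k) != 0)).
Proof.
move=> n_neq2 jk; apply/andP => [[/(type_rep_top_support n_neq2) sj_top]].
move=> /(type_rep_top_support n_neq2) sk_top; move/negP: jk; apply.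
by rewrite -(inj_eq (@perm_inj _ s)) -val_eqE sj_top sk_top.
Qed.

Lemma lam_1_2 : lam n 1 = lam (R := R) n 2.
Proof. by rewrite /lam /= addnK. Qed.

Lemma dotp_vertex_root_center s e i (j k : 'I_n) sj sk :
  let w := weyl_act s e (type_rep (R := R) n i) in
  0 < dotp w (root_center j k sj sk) ->
  dotp w (root_center j k sj sk) =
  lam n i *+ ((type_rep (R := R) n i (s j) != 0) +
              (type_rep (R := R) n i (s k) != 0)).
Proof.
move=> w; rewrite dotp_root_center pmulr_lgt0 ?invr_gt0 ?sqrtr_gt0 //.
have coord (b : bool) m :
    ((-1) ^+ b * w m == 0) || (`|(-1) ^+ b * w m| == Num.sqrt 2 * lam n i).
  by rewrite signed_weyl_act_eq0 normr_signed_weyl_act type_rep_coord.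
move=> /(addr_gt0_norm_or0 (coord _ _) (coord _ _)) ->.
rewrite !signed_weyl_act_eq0 -mulrnAr mulrC mulKf // gt_eqF // sqrtr_gt0.
Qed.

End Vertices.

Theorem lemma2p14 (R : realType) (n : nat) (hn : (4 <= n)%N)
  (i : nat) (hi : (1 <= i <= n)%N)
  (j k : 'I_n) (hjk : j != k) (sj sk : bool) (v : 'I_n -> R) :
  vertex_of_type n i v ->
  root_interior (root_center j k sj sk) v ->
  let d := sin (sdist_set v (great_sphere (root_center j k sj sk))) in
  (d = lam n i \/ d = 2 * lam n i) /\
  (i = n -> d = lam n n) /\
  (i = 1%N \/ i = 2%N -> d = 2 * lam (R := R) n 1 /\ d = 2 * lam (R := R) n 2).
Proof.
move=> [s [e [_ ->]]] int_v d; rewrite {}/d.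
have vc_gt0 := root_interior_dotp_gt0 int_v.
rewrite (sin_sdist_great_sphere int_v.1.1 (root_center_sphere _ hjk _ _)
  (great_sphere_root_center_flip _ hjk _ _) (ltW vc_gt0)).
move: (vc_gt0); rewrite (dotp_vertex_root_center vc_gt0).
set nzj := type_rep n i (s j) != 0; set nzk := type_rep n i (s k) != 0.
have top_single : i = n -> ~~ (nzj && nzk).
  move=> i_n; subst i; apply: type_rep_top_single hjk.
  by rewrite neq_ltn orbC (leq_trans _ hn).
have low_full : i = 1%N \/ i = 2%N -> nzj && nzk.
  move=> i12; have {}i12 : (i == 1%N) || (i == 2%N) by case: i12 => ->.
  by rewrite /nzj /nzk !type_rep_neq0 // (leq_trans _ hn).
have lam_i12 : i = 1%N \/ i = 2%N -> lam n i = lam (R := R) n 2.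
  by case=> ->; rewrite ?lam_1_2.
clearbody nzj nzk; move: top_single low_full.
case: nzj; case: nzk => /= top_single low_full lam_cnt_gt0; rewrite ?mulr1n.
- split; first by right; rewrite mulr_natl.
  by split=> [/top_single // | /lam_i12 ->]; rewrite lam_1_2 mulr_natl.
- by split; [left | split=> [-> // | /low_full]].
- by split; [left | split=> [-> // | /low_full]].
- by move: lam_cnt_gt0; rewrite mulr0n ltxx.
Qed.
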